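(* Let $X=(x_1,\dots,x_t)$ be distinct elements of $[n]$ and let $\mathrm{Shuffle}(\pi,X)$ be the procedure: for $i=t,t-1,\dots,1$, choose $z$ uniformly at random from $[n]\setminus\{x_1,\dots,x_{i-1}\}$ and swap the values $\pi(x_i)$ and $\pi(z)$; output $\pi$. (a) If $\phi:X\to[n]$ is injective and $\pi$ is uniformly random among permutations of $[n]$ with $\pi|_X=\phi$, then $\mathrm{Shuffle}(\pi,X)$ is a uniformly random permutation of $[n]$. (b) Let $E$ be a pattern event with $\mathrm{vbl}(E)=X$ and let $\pi\in E$. If $E'$ is a pattern event with $\pi\notin E'$ and $\mathrm{Shuffle}(\pi,X)\in E'$ with positive probability, then there exist $(x,y)\in P(E)$ and $(x',y')\in P(E')$ with $x=x'$ or $y=y'$.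
   Context: The probability space is the set of permutations of $[n]$ with the uniform measure. A pattern event $E$ is given by a set $P(E)=\{(x_1,y_1),\dots,(x_k,y_k)\}\subseteq[n]\times[n]$ and occurs for $\pi$ iff $\pi(x_j)=y_j$ for all $j$; $\mathrm{vbl}(E)=\{x:\exists y,(x,y)\in P(E)\}$. ''Swap the values $\pi(a)$ and $\pi(b)$'' means replacing $\pi$ by $\pi\circ\tau_{ab}$ with $\tau_{ab}$ the transposition of $a,b$ (no-op if $a=b$). *)

From HB Require Import structures.
From mathcomp Require Import all_boot all_order all_algebra all_fingroup.
Set Implicit Arguments. Unset Strict Implicit. Unset Printing Implicit Defensive.
Import GRing.Theory Num.Theory.
Local Open Scope ring_scope.

(* Permutations of [n] are {perm 'I_n}.  In mathcomp, (s * t) x = t (s x),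
   so pi o tau_ab  (x |-> pi (tau_ab x)) is  tperm a b * pi. *)
Definition swapv (n : nat) (pi : {perm 'I_n}) (a b : 'I_n) : {perm 'I_n} :=
  tperm a b * pi.

(* Output distribution of the Shuffle procedure, written on the REVERSED
   list r = [:: x_i; x_{i-1}; ...; x_1]: the first step handles x_i, choosing
   z uniformly in [n] \ {x_1,...,x_{i-1}} (the complement of the tail). *)
Fixpoint shuffle_rev (n : nat) (r : seq 'I_n) (pi : {perm 'I_n}) (s : {perm 'I_n})
  : rat :=
  match r with
  | [::] => (s == pi)%:R
  | x :: r' =>
      (#|[set z : 'I_n | z \notin r']|%:R)^-1 *
      \sum_(z : 'I_n | z \notin r') shuffle_rev r' (swapv pi x z) s
  end.

Definition shuffle_dist (n : nat) (X : seq 'I_n) (pi s : {perm 'I_n}) : rat :=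
  shuffle_rev (rev X) pi s.

(* Pattern events: given by P(E) : {set 'I_n * 'I_n}. *)
Definition occurs (n : nat) (P : {set 'I_n * 'I_n}) (pi : {perm 'I_n}) : bool :=
  [forall p in P, pi p.1 == p.2].

Definition vbl (n : nat) (P : {set 'I_n * 'I_n}) : {set 'I_n} :=
  [set x | [exists y, (x, y) \in P]].

From HB Require Import structures.
From mathcomp Require Import all_boot all_order all_algebra all_fingroup.
Import GRing.Theory Num.Theory.
Local Open Scope ring_scope.

(* (a) For x outside r, the map (pi, z) |-> tperm x z * pi is a bijection from
   {pi extending phi on x :: r} x {z outside r} onto {pi extending phi on r}:
   its inverse sends pi to (tperm x z * pi, z) with z := pi^-1 (phi x).  Hence
   one step of the shuffle maps the uniform distribution on the extensions of
   phi on x :: r to the uniform distribution on the extensions on r, and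
   induction on X ends with the uniform distribution on all permutations.
   (b) Each step only moves the value of x_i to a position z and the value of z
   to x_i, so after the shuffle the value at any position outside X is either
   unchanged or was the value pi(x) = y of some (x, y) in P(E). *)

Section Shuffle.

Variable n : nat.
Implicit Types (r : seq 'I_n) (phi : 'I_n -> 'I_n) (pi s : {perm 'I_n}).

Definition agree phi r pi := all (fun y => pi y == phi y) r.

Lemma sum_tperm_agree_cons x r phi (f : {perm 'I_n} -> rat) :
  x \notin r -> {in x :: r &, injective phi} ->
  \sum_(pi in agree phi (x :: r)) \sum_(z | z \notin r) f (tperm x z * pi)%g
  = \sum_(pi in agree phi r) f pi.
Proof.
move=> xr inj; rewrite exchange_big /=.
transitivity (\sum_(z | z \notin r)
   \sum_(pi | agree phi r pi && (pi z == phi x)) f pi).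
  apply: eq_bigr => z zr.
  rewrite (reindex_inj (mulgI (tperm x z))) /=.
  apply: eq_big => [pi|pi _]; last by rewrite mulgA tperm2 mul1g.
  rewrite /agree /= unfold_in /= permM tpermL andbC; congr (_ && _).
  apply: eq_in_all => y yr; rewrite permM tpermD //.
    by apply: contraNneq xr => ->.
  by apply: contraNneq zr => ->.
rewrite (eq_bigr _ (fun z _ => big_mkcondr _ _ _ _ _)) exchange_big /=.
apply: eq_bigr => pi agr; rewrite -big_mkcondr /=.
rewrite (big_pred1 (pi^-1 (phi x))%g) // => z /=.
have -> : (pi z == phi x) = (z == (pi^-1 (phi x))%g).
  by apply/eqP/eqP => [<-|->]; rewrite ?permK ?permKV.
have [-> /=|] := eqVneq z; rewrite ?andbF ?andbT //.
apply/negP => zr; have /eqP := allP agr _ zr; rewrite permKV => phi_zx.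
have := inj _ _ _ _ phi_zx; rewrite !inE eqxx zr orbT => /(_ isT isT) zx.
by rewrite zx zr in xr.
Qed.

Lemma card_agree_cons [x r phi] :
  x \notin r -> {in x :: r &, injective phi} ->
  (#|agree phi (x :: r)| * #|[pred z | z \notin r]|)%N = #|agree phi r|.
Proof.
move=> xr inj; apply/eqP; rewrite -(eqr_nat rat) natrM mulrC.
have := @sum_tperm_agree_cons x r phi (fun=> 1) xr inj.
rewrite (eq_bigr (fun=> #|[pred z | z \notin r]|%:R)) => [|pi _]; last exact: sumr_const.
by rewrite !sumr_const => <-; rewrite mulr_natr.
Qed.

Lemma in2_behead [x r phi] : {in x :: r &, injective phi} -> {in r &, injective phi}.
Proof. by apply: sub_in2 => y yr; rewrite inE yr orbT. Qed.

Lemma card_agree_gt0 r phi :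
  uniq r -> {in r &, injective phi} -> (0 < #|agree phi r|)%N.
Proof.
elim: r => [|x r IHr] /= => [_ _|/andP[xr ur] inj]; first by apply/card_gt0P; exists 1%g.
rewrite -(card_agree_cons xr inj) muln_gt0 in IHr.
by case/andP: (IHr ur (in2_behead inj)).
Qed.

Lemma sum_shuffle_rev_agree r phi s :
  uniq r -> {in r &, injective phi} ->
  \sum_(pi in agree phi r) shuffle_rev r pi s = #|agree phi r|%:R / (n`!)%:R.
Proof.
elim: r => [|x r IHr] /= => [_ _|/andP[xr ur] inj].
  have -> : #|agree phi [::]| = n`! by rewrite -card_Sn; apply: eq_card.
  rewrite divff ?pnatr_eq0 -?lt0n ?fact_gt0 // (bigD1 s) //= eqxx big1 ?addr0 //.
  by move=> pi /negPf; rewrite eq_sym => ->.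
rewrite -big_distrr /= (@sum_tperm_agree_cons x r phi (shuffle_rev r ^~ s)) //.
rewrite (IHr ur (in2_behead inj)) -(card_agree_cons xr inj).
have cr_gt0 : (0 < #|[pred z | z \notin r]|)%N by apply/card_gt0P; exists x.
by rewrite cardsE natrM mulrA mulrCA mulVf ?mulr1 // pnatr_eq0 -lt0n.
Qed.

Lemma shuffle_rev_neq0_value r pi s w :
  uniq r -> shuffle_rev r pi s != 0 -> w \notin r ->
  exists2 u, u \in w :: r & s w = pi u.
Proof.
elim: r pi => [|x r IHr] pi /= => [_|/andP[xr ur]].
  by have [-> _ _|_] := eqVneq s pi; [exists w; rewrite ?inE | rewrite eqxx].
rewrite mulf_eq0 negb_or inE negb_or => /andP[_ sum_neq0] /andP[wx wr].
have [z zr] : exists2 z, z \notin r & shuffle_rev r (swapv pi x z) s != 0.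
  apply/exists_inP; apply: contraNT sum_neq0 => /exists_inPn all0.
  by apply/eqP/big1 => z zr; apply/eqP/negbNE/all0.
case/(IHr _ ur)/(_ wr) => u uwr ->; exists (tperm x z u); last by rewrite /swapv permM.
case: tpermP => [ux|_|_ _]; rewrite !inE ?eqxx ?orbT //.
by move: uwr; rewrite ux inE (negPf xr) orbF => /eqP xw; rewrite xw eqxx in wx.
by move: uwr; rewrite inE => /orP[->|->]; rewrite ?orbT.
Qed.

Lemma shuffle_dist_uniform X phi s :
  uniq X -> {in X &, injective phi} ->
  (#|[set pi | agree phi X pi]|%:R)^-1 *
    \sum_(pi | agree phi X pi) shuffle_dist X pi s = (n`!%:R)^-1.
Proof.
move=> uX inj; have agree_rev : agree phi (rev X) =i agree phi X.
  by move=> pi; rewrite !unfold_in /agree all_rev.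
have inj_rev : {in rev X &, injective phi}.
  by move=> y z; rewrite !mem_rev; apply: inj.
have uXr : uniq (rev X) by rewrite rev_uniq.
rewrite -(eq_bigl _ _ agree_rev) sum_shuffle_rev_agree //.
have -> : #|[set pi | agree phi X pi]| = #|agree phi (rev X)|.
  by rewrite (eq_card agree_rev); apply: eq_card => pi; rewrite inE.
by rewrite mulrA mulVf ?mul1r // pnatr_eq0 -lt0n card_agree_gt0.
Qed.

Lemma shuffle_dist_pattern_overlap X (E E' : {set 'I_n * 'I_n}) pi :
  uniq X -> vbl E = [set x in X] -> occurs E pi -> ~~ occurs E' pi ->
  (exists s, occurs E' s /\ 0 < shuffle_dist X pi s) ->
  exists p, exists p', [/\ p \in E, p' \in E' & (p.1 == p'.1) || (p.2 == p'.2)].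
Proof.
move=> uX vblE occE /forall_inPn[p' E'p' pi_p'] [s [occE's s_pos]].
have /eqP s_p' := forall_inP occE's _ E'p'.
have vblX u : u \in X -> exists2 y, (u, y) \in E & pi u = y.
  move=> uX'; have : u \in vbl E by rewrite vblE inE.
  rewrite inE => /existsP[y Euy]; exists y => //.
  exact/eqP/(forall_inP occE _ Euy).
have [p'X | p'nX] := boolP (p'.1 \in X).
  have [y Ey _] := vblX _ p'X.
  by exists (p'.1, y), p'; rewrite Ey E'p' eqxx.
have [u] : exists2 u, u \in p'.1 :: rev X & s p'.1 = pi u.
  by apply: shuffle_rev_neq0_value; rewrite ?rev_uniq ?mem_rev ?lt0r_neq0.
rewrite inE mem_rev => /orP[/eqP ->|uX'] s_u; first by rewrite -s_u s_p' eqxx in pi_p'.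
have [y Ey pi_u] := vblX _ uX'.
by exists (u, y), p'; rewrite Ey E'p' /= -pi_u -s_u s_p' eqxx orbT.
Qed.

End Shuffle.

Theorem mainTheorem13 (n : nat) (X : seq 'I_n) (hX : uniq X) :
  (forall phi : 'I_n -> 'I_n, {in X &, injective phi} ->
     forall s : {perm 'I_n},
       (#|[set pi : {perm 'I_n} | all (fun x => pi x == phi x) X]|%:R)^-1 *
       (\sum_(pi : {perm 'I_n} | all (fun x => pi x == phi x) X)
           shuffle_dist X pi s)
       = ((n`!)%:R)^-1 :> rat)
  /\
  (forall (E E' : {set 'I_n * 'I_n}) (pi : {perm 'I_n}),
     vbl E = [set x in X] ->
     occurs E pi ->
     ~~ occurs E' pi ->
     (exists s : {perm 'I_n}, occurs E' s /\ 0 < shuffle_dist X pi s) ->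
     exists p, exists p', [/\ p \in E, p' \in E' & (p.1 == p'.1) || (p.2 == p'.2)]).
Proof.
split=> [phi inj s | E E' pi]; first exact: shuffle_dist_uniform.
exact: shuffle_dist_pattern_overlap.
Qed.
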